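(* Let $L$ be a Leibniz algebra over $F$ and $(l,r,V)$ a representation of $L$. Let $A$ be a subspace of $L$ and $x\in n_L(A)$. Then for every integer $k\ge 0$ and every $a\in A$: (i) $\delta_{k+1}:=r_a^{k+1}r_x-r_xr_a^{k+1}\in (r_A)^{k+1}$; (ii) $\beta_{k+1}:=r_x^{k+1}r_a-r_ar_x^{k+1}\in r_Ar_x^{k}+\cdots+r_Ar_x+r_A$.
   Context: $F$ is an algebraically closed field of characteristic zero; all spaces are finite-dimensional. A (right) Leibniz algebra is a vector space $L$ with bilinear bracket satisfying $[x,[y,z]]=[[x,y],z]-[[x,z],y]$. A representation $(l,r,V)$ of $L$ is a vector space $V$ with linear maps $l,r:L\to\mathrm{End}_F(V)$, $x\mapsto l_x,r_x$, such that $r_{[x,y]}=r_yr_x-r_xr_y$, $l_{[x,y]}=r_yl_x-l_xr_y$, $l_{[x,y]}=r_yl_x+l_xl_y$ (products are compositions). For a subspace $A\subseteq L$, $r_A=\{r_a:a\in A\}$ (a subspace of $\mathrm{End}_F(V)$); $(r_A)^p$ is the linear span of all compositions $r_{a_1}\cdots r_{a_p}$ with $a_i\in A$; $r_Ar_x^j=\{r_a r_x^j: a\in A\}$, with $r_x^0=\mathrm{id}_V$; $+$ denotes sum of subspaces. The normalizer of $A$ is $n_L(A)=\{y\in L: [y,a]\in A \text{ and } [a,y]\in A \text{ for all } a\in A\}$. *)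

From mathcomp Require Import all_boot all_order all_algebra.
Set Implicit Arguments. Unset Strict Implicit. Unset Printing Implicit Defensive.
Import GRing.Theory.
Local Open Scope ring_scope.

Definition lpow (F : fieldType) (V : vectType F) (f : 'End(V)) (n : nat) : 'End(V) :=
  iter n (fun g => (f \o g)%VF) \1%VF.

Definition rprod (F : fieldType) (L V : vectType F) (r : L -> 'End(V)) (s : seq L)
  : 'End(V) := foldr (fun b g => (r b \o g)%VF) \1%VF s.

(* f lies in (r_A)^p : the linear span of all r_{a_1} ... r_{a_p}, a_i in A. *)
Definition in_rA_pow (F : fieldType) (L V : vectType F) (r : L -> 'End(V))
  (A : {vspace L}) (p : nat) (f : 'End(V)) : Prop :=
  exists (n : nat) (c : 'I_n -> F) (a : 'I_n -> p.-tuple L),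
    (forall i, all (fun b => b \in A) (a i)) /\
    f = \sum_(i < n) c i *: rprod r (a i).

Definition in_rA_sum_rx (F : fieldType) (L V : vectType F) (r : L -> 'End(V))
  (A : {vspace L}) (x : L) (k : nat) (f : 'End(V)) : Prop :=
  exists a : 'I_k.+1 -> L, (forall j, a j \in A) /\
    f = \sum_(j < k.+1) (r (a j) \o lpow (r x) j)%VF.

Definition in_normalizer (F : fieldType) (L : vectType F) (br : L -> L -> L)
  (A : {vspace L}) (y : L) : Prop :=
  forall a, a \in A -> br y a \in A /\ br a y \in A.

From mathcomp Require Import all_boot all_order all_algebra.
Import GRing.Theory.
Local Open Scope ring_scope.
Set Implicit Arguments. Unset Strict Implicit.

(* Writing [f, g] = f g - g f in End(V), the representation axiom says
   r_[y,z] = [r_z, r_y], so x in n_L(A) gives [r_a, r_x] = r_[x,a] and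
   [r_x, r_a] = r_[a,x] with [x,a], [a,x] in A.  Both claims then follow by
   induction on the power from the Leibniz rule for [-, -]:
   [r_a^(n+1), r_x] = r_a [r_a^n, r_x] + r_[x,a] r_a^n, and
   [r_x^(n+1), r_b] = [r_x^n, r_b] r_x + [r_x^n, r_[b,x]] + r_[b,x] r_x^n. *)

Section Commutator.
Variables (F : fieldType) (V : vectType F).
Implicit Types f g h : 'End(V).

Definition lcomm f g : 'End(V) := (f \o g)%VF - (g \o f)%VF.

Lemma lcomm1l f : lcomm \1%VF f = 0.
Proof. by rewrite /lcomm comp_lfun1l comp_lfun1r subrr. Qed.

Lemma lcomm_compl f g h :
  lcomm (f \o g)%VF h = (f \o lcomm g h)%VF + (lcomm f h \o g)%VF.
Proof.
rewrite /lcomm comp_lfunDr comp_lfunNr comp_lfunDl comp_lfunNl !comp_lfunA.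
by rewrite addrA subrK.
Qed.

Lemma comp_lfun_suml n (G : 'I_n -> 'End(V)) f :
  ((\sum_(i < n) G i) \o f = \sum_(i < n) (G i \o f))%VF.
Proof.
elim/big_rec2: _ => [|i y1 y2 _ <-]; first by rewrite comp_lfun0l.
by rewrite comp_lfunDl.
Qed.

Lemma comp_lfun_sumr f n (G : 'I_n -> 'End(V)) :
  (f \o \sum_(i < n) G i = \sum_(i < n) (f \o G i))%VF.
Proof.
elim/big_rec2: _ => [|i y1 y2 _ <-]; first by rewrite comp_lfun0r.
by rewrite comp_lfunDr.
Qed.

Lemma lpowSl f n : lpow f n.+1 = (f \o lpow f n)%VF.
Proof. by []. Qed.

Lemma lpowSr f n : lpow f n.+1 = (lpow f n \o f)%VF.
Proof.
elim: n => [|n IH]; first by rewrite /lpow /= comp_lfun1l comp_lfun1r.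
by rewrite lpowSl {1}IH comp_lfunA.
Qed.

End Commutator.

Section RepresentationSpans.
Variables (F : fieldType) (L V : vectType F) (r : L -> 'End(V)).
Variable A : {vspace L}.

Lemma rA_pow0 p : in_rA_pow r A p 0.
Proof.
by exists 0%N, (fun=> 0), (fun=> [tuple of nseq p 0]); split; [case | rewrite big_ord0].
Qed.

Lemma rA_powD p f g :
  in_rA_pow r A p f -> in_rA_pow r A p g -> in_rA_pow r A p (f + g).
Proof.
move=> [n [c [a [Aa ->]]]] [m [d [b [Ab ->]]]].
exists (n + m), (fun i => match split i with inl j => c j | inr j => d j end),
  (fun i => match split i with inl j => a j | inr j => b j end).
split; first by move=> i; case: (split i).
rewrite big_split_ord /=; congr (_ + _); apply: eq_bigr => i _.
  by rewrite (unsplitK (inl i : 'I_n + 'I_m)).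
by rewrite (unsplitK (inr i : 'I_n + 'I_m)).
Qed.

Lemma rA_pow_compl p b f :
  b \in A -> in_rA_pow r A p f -> in_rA_pow r A p.+1 (r b \o f)%VF.
Proof.
move=> Ab [n [c [a [Aa ->]]]].
exists n, c, (fun i => [tuple of b :: a i]); split; first by move=> i /=; rewrite Ab Aa.
by rewrite comp_lfun_sumr; apply: eq_bigr => i _; rewrite -comp_lfunZr.
Qed.

Lemma rA_pow_lpow a n : a \in A -> in_rA_pow r A n (lpow (r a) n).
Proof.
move=> Aa; exists 1%N, (fun=> 1), (fun=> [tuple of nseq n a]); split.
  by move=> i; apply/allP => y /nseqP [-> _].
by rewrite big_ord1 scale1r /rprod /lpow /=; elim: n => //= n ->.
Qed.

Lemma lcomm_lpow_rA_pow f a c :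
  a \in A -> c \in A -> lcomm (r a) f = r c ->
  forall n, in_rA_pow r A n (lcomm (lpow (r a) n) f).
Proof.
move=> Aa Ac ac; elim=> [|n IH]; first by rewrite lcomm1l; apply: rA_pow0.
rewrite lpowSl lcomm_compl ac.
by apply: rA_powD; apply: rA_pow_compl => //; apply: rA_pow_lpow.
Qed.

Hypothesis r_linear : linear r.

Lemma linearD_r u v : r (u + v) = r u + r v.
Proof. by have := r_linear 1 u v; rewrite !scale1r. Qed.

Lemma linear0_r : r 0 = 0.
Proof. by apply: (addrI (r 0)); rewrite -linearD_r !addr0. Qed.

(* [f \in r_A + r_A g + ... + r_A g^(n-1)]; coefficients indexed by [nat] so
   that the number of terms can grow without reindexing. *)
Definition in_rA_sum_pow (g : 'End(V)) n f := exists c : nat -> L,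
  (forall j, c j \in A) /\ f = \sum_(j < n) (r (c j) \o lpow g j)%VF.

Variable g : 'End(V).

Lemma rA_sum_pow0 : in_rA_sum_pow g 0 0.
Proof. by exists (fun=> 0); split; [move=> _; rewrite mem0v | rewrite big_ord0]. Qed.

Lemma rA_sum_powD n f h :
  in_rA_sum_pow g n f -> in_rA_sum_pow g n h -> in_rA_sum_pow g n (f + h).
Proof.
move=> [c [Ac ->]] [d [Ad ->]]; exists (fun j => c j + d j); split.
  by move=> j; rewrite rpredD.
by rewrite -big_split; apply: eq_bigr => i _; rewrite linearD_r comp_lfunDl.
Qed.

Lemma rA_sum_powS n f : in_rA_sum_pow g n f -> in_rA_sum_pow g n.+1 f.
Proof.
move=> [c [Ac ->]]; exists (fun j => if (j < n)%N then c j else 0); split.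
  by move=> j; case: ifP; rewrite ?mem0v.
rewrite big_ord_recr /= ltnn linear0_r comp_lfun0l addr0.
by apply: eq_bigr => i _; rewrite ltn_ord.
Qed.

Lemma rA_sum_pow_compr n f :
  in_rA_sum_pow g n f -> in_rA_sum_pow g n.+1 (f \o g)%VF.
Proof.
move=> [c [Ac ->]]; exists (fun j => if j is j'.+1 then c j' else 0); split.
  by case=> [|j]; rewrite ?mem0v.
rewrite big_ord_recl /= linear0_r comp_lfun0l add0r comp_lfun_suml.
by apply: eq_bigr => i _; rewrite -comp_lfunA -lpowSr.
Qed.

Lemma rA_sum_pow_top n b : b \in A -> in_rA_sum_pow g n.+1 (r b \o lpow g n)%VF.
Proof.
move=> Ab; exists (fun j => if j == n then b else 0); split.
  by move=> j; case: ifP; rewrite ?mem0v.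
rewrite big_ord_recr /= eqxx big1 ?add0r // => i _.
by rewrite (ltn_eqF (ltn_ord i)) linear0_r comp_lfun0l.
Qed.

Lemma lcomm_lpow_rA_sum_pow :
  (forall b, b \in A -> exists2 c, c \in A & lcomm g (r b) = r c) ->
  forall n b, b \in A -> in_rA_sum_pow g n (lcomm (lpow g n) (r b)).
Proof.
move=> gA; elim=> [|n IH] b Ab; first by rewrite lcomm1l; apply: rA_sum_pow0.
have [c Ac bc] := gA b Ab.
have -> : lcomm (lpow g n.+1) (r b) =
    (lcomm (lpow g n) (r b) \o g)%VF + (lcomm (lpow g n) (r c) + (r c \o lpow g n)%VF).
  by rewrite lpowSr lcomm_compl bc /lcomm subrK addrC.
apply: rA_sum_powD; first exact/rA_sum_pow_compr/IH.
by apply: rA_sum_powD; [apply/rA_sum_powS/IH | apply: rA_sum_pow_top].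
Qed.

Lemma rA_sum_pow_sum_rx x k f :
  in_rA_sum_pow (r x) k.+1 f -> in_rA_sum_rx r A x k f.
Proof. by move=> [c [Ac ->]]; exists (fun j : 'I_k.+1 => c j). Qed.

End RepresentationSpans.

Theorem lemma2p11 (F : closedFieldType) (L V : vectType F)
  (br : L -> L -> L) (l r : L -> 'End(V)) (A : {vspace L}) (x : L) :
  [pchar F] =i pred0 ->
  (forall y, linear (br y)) -> (forall z, linear (br^~ z)) ->
  (forall y z w, br y (br z w) = br (br y z) w - br (br y w) z) ->
  linear r -> linear l ->
  (forall y z, r (br y z) = (r z \o r y)%VF - (r y \o r z)%VF) ->
  (forall y z, l (br y z) = (r z \o l y)%VF - (l y \o r z)%VF) ->
  (forall y z, l (br y z) = (r z \o l y)%VF + (l y \o l z)%VF) ->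
  in_normalizer br A x ->
  forall (k : nat) (a : L), a \in A ->
    in_rA_pow r A k.+1 ((lpow (r a) k.+1 \o r x)%VF - (r x \o lpow (r a) k.+1)%VF) /\
    in_rA_sum_rx r A x k ((lpow (r x) k.+1 \o r a)%VF - (r a \o lpow (r x) k.+1)%VF).
Proof.
move=> _ _ _ _ r_lin _ r_br _ _ nAx k a Aa.
have r_brE y z : r (br y z) = lcomm (r z) (r y) by rewrite r_br.
split.
  have [Axa _] := nAx a Aa.
  exact: (lcomm_lpow_rA_pow Aa Axa (esym (r_brE x a))).
apply: rA_sum_pow_sum_rx.
apply: (lcomm_lpow_rA_sum_pow r_lin) Aa => b Ab.
by have [_ Abx] := nAx b Ab; exists (br b x); rewrite ?r_brE.
Qed.
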